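(* Let $G$ be a connected graph with $n$ vertices and $m$ edges. If $m\ge 2n^{3/2}$, then $\frac{q(G)}{R(G)}<\frac{n}{\sqrt{n-1}}$.
   Context: All graphs are finite and simple. For a vertex $u$, $d(u)$ is its degree. The Randić index is $R(G)=\sum_{\{u,v\}\in E(G)} \frac{1}{\sqrt{d(u)d(v)}}$. The signless Laplacian is $Q=D+A$ ($D$ the diagonal degree matrix, $A$ the adjacency matrix), and $q(G)$ is its largest eigenvalue. *)

(* Simple graph on vertex set 'I_n given by a symmetric,
   irreflexive boolean relation e. *)
From HB Require Import structures.
From mathcomp Require Import all_boot all_order all_algebra.
Set Implicit Arguments. Unset Strict Implicit. Unset Printing Implicit Defensive.
Import Order.TTheory GRing.Theory Num.Theory.
Local Open Scope ring_scope.

Section Graph.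
Variable n : nat.
Variable e : rel 'I_n.

Definition deg (u : 'I_n) : nat := #|[set v | e u v]|.

Definition edges : {set {set 'I_n}} :=
  [set E : {set 'I_n} | [exists u, exists v, (E == [set u; v]) && e u v]].

Definition nedges : nat := #|edges|.

Definition randic (R : rcfType) : R :=
  \sum_(E in edges) (Num.sqrt ((\prod_(v in E) deg v)%N)%:R)^-1.

Definition signless_lap (R : rcfType) : 'M[R]_n :=
  \matrix_(i, j) ((deg i)%:R *+ (i == j) + (e i j)%:R).

End Graph.

From HB Require Import structures.
From mathcomp Require Import all_boot all_order all_algebra.
From mathcomp Require Import lra.
Set Implicit Arguments. Unset Strict Implicit. Unset Printing Implicit Defensive.
Import Order.TTheory GRing.Theory Num.Theory.
Local Open Scope ring_scope.

(* Every degree is at most n - 1, so the signless Laplacian has spectral radius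
   at most 2(n - 1) (look at the largest coordinate of an eigenvector), while
   every edge contributes at least 1/(n - 1) to the Randic index.  Hence
   q/R <= 2(n - 1)^2 / m <= (n - 1)^2 / n^(3/2) < n / sqrt(n - 1).
   The spectral bound holds for every eigenvalue. *)

Section DegreeBounds.
Variables (n : nat) (e : rel 'I_n).
Hypotheses (e_sym : symmetric e) (e_irr : irreflexive e).

Lemma deg_le_pred (u : 'I_n) : (deg e u <= n.-1)%N.
Proof.
have <- : #|predC1 u| = n.-1 by rewrite cardC1 card_ord.
apply: subset_leq_card; apply/subsetP => v.
by rewrite !inE; apply: contraTneq => ->; rewrite e_irr.
Qed.

Lemma sum_adj_deg (R : nzSemiRingType) (i : 'I_n) :
  \sum_j (e j i)%:R = (deg e i)%:R :> R.
Proof.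
rewrite /deg -sum1_card natr_sum [RHS]big_mkcond /=.
by apply: eq_bigr => j _; rewrite inE e_sym; case: (e i j).
Qed.

Lemma card_gt1_of_edge (u v : 'I_n) : e u v -> (1 < n)%N.
Proof.
move=> euv; have uv : u != v by apply: contraTneq euv => ->; rewrite e_irr.
by have := max_card [set u; v]; rewrite cards2 uv card_ord.
Qed.

End DegreeBounds.

Lemma eigenvalue_dim_gt0 (R : fieldType) (n : nat) (A : 'M[R]_n) (a : R) :
  eigenvalue A a -> (0 < n)%N.
Proof. by case: n A => // A /eigenvalueP[v _]; rewrite thinmx0 eqxx. Qed.

Lemma edgesP (n : nat) (e : rel 'I_n) (E : {set 'I_n}) :
  E \in edges e -> exists u v, E = [set u; v] /\ e u v.
Proof. by rewrite inE => /existsP[u /existsP[v /andP[/eqP -> h]]]; exists u, v. Qed.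

Section SignlessLaplacian.
Variables (R : rcfType) (n : nat) (e : rel 'I_n).
Hypotheses (e_sym : symmetric e) (e_irr : irreflexive e).

Lemma signless_lap_coord (v : 'rV[R]_n) (i : 'I_n) :
  (v *m signless_lap e R) 0 i = v 0 i * (deg e i)%:R + \sum_j v 0 j * (e j i)%:R.
Proof.
rewrite mxE; under eq_bigr => j _ do rewrite mxE mulrDr.
rewrite big_split /= (bigD1 i) //= eqxx mulr1n big1 ?addr0 //.
by move=> j /negbTE ->; rewrite mulr0n mulr0.
Qed.

Lemma eigenvalue_signless_lap_le (q : R) :
  eigenvalue (signless_lap e R) q -> q <= 2 * (n.-1)%:R.
Proof.
move=> hq; have n_gt0 := eigenvalue_dim_gt0 hq.
move/eigenvalueP: hq => [v hv v_neq0].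
pose i := [arg max_(i > Ordinal n_gt0) `|v 0 i|]%O.
have vi_max j : `|v 0 j| <= `|v 0 i| by rewrite /i; case: arg_maxP => // k _; apply.
have vi_gt0 : 0 < `|v 0 i|.
  rewrite normr_gt0; apply: contra v_neq0 => /eqP vi0; apply/eqP/rowP => j.
  by apply/eqP; rewrite mxE -normr_le0 (le_trans (vi_max j)) // vi0 normr0.
have adj_le : `|\sum_j v 0 j * (e j i)%:R| <= `|v 0 i| * (deg e i)%:R.
  rewrite -sum_adj_deg // mulr_sumr; apply: (le_trans (ler_norm_sum _ _ _)).
  by apply: ler_sum => j _; rewrite normrM normr_nat ler_wpM2r.
have deg_le : (deg e i)%:R <= (n.-1)%:R :> R by rewrite ler_nat deg_le_pred.
have : `|q| * `|v 0 i| <= `|v 0 i| * (deg e i)%:R + `|v 0 i| * (deg e i)%:R.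
  have := congr1 (fun w : 'rV[R]_n => w 0 i) hv.
  rewrite signless_lap_coord mxE -normrM => <-; apply: (le_trans (ler_normD _ _)); apply: lerD => //.
  by rewrite normrM normr_nat.
rewrite -mulrDr -[X in _ <= X]mulrC ler_pM2r // => /(le_trans (ler_norm q)).
by move/le_trans; apply; rewrite mulr2n mulrDl !mul1r lerD.
Qed.

Lemma randic_edge_ge (E : {set 'I_n}) : E \in edges e ->
  (n.-1)%:R^-1 <= (Num.sqrt ((\prod_(v in E) deg e v)%N)%:R)^-1 :> R.
Proof.
move=> /edgesP[a [b [-> eab]]].
have ab : a != b by apply: contraTneq eab => ->; rewrite e_irr.
rewrite big_setU1 ?inE //= big_set1.
have da : (0 < deg e a)%N by apply/card_gt0P; exists b; rewrite inE.
have db : (0 < deg e b)%N by apply/card_gt0P; exists a; rewrite inE e_sym.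
have sqrt_gt0 : 0 < Num.sqrt (deg e a * deg e b)%:R :> R
  by rewrite sqrtr_gt0 ltr0n muln_gt0 da.
have sqrt_le : Num.sqrt (deg e a * deg e b)%:R <= (n.-1)%:R :> R.
  rewrite -(ger0_norm (ler0n _ n.-1)) -sqrtr_sqr ler_sqrt ?sqr_ge0 //.
  by rewrite -natrX ler_nat expnS expn1 leq_mul ?deg_le_pred.
by rewrite lef_pV2 ?posrE ?(lt_le_trans sqrt_gt0 sqrt_le).
Qed.

Lemma nedges_div_le_randic : (nedges e)%:R / (n.-1)%:R <= randic e R.
Proof.
rewrite /randic /nedges mulr_natl -sumr_const.
by apply: ler_sum => E; apply: randic_edge_ge.
Qed.

End SignlessLaplacian.

Lemma dense_ratio_lt (R : rcfType) (d m : R) :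
  1 <= d -> 2 * (d + 1) * Num.sqrt (d + 1) <= m ->
  2 * d / (m / d) < (d + 1) / Num.sqrt d.
Proof.
move=> d_ge1 hm; set t := Num.sqrt d; set s := Num.sqrt (d + 1).
have d_gt0 : 0 < d by lra.
have t_gt0 : 0 < t by rewrite sqrtr_gt0.
have t_le_s : t <= s by rewrite ler_sqrt ?addr_ge0 ?ltW //; lra.
have s_gt0 : 0 < s by exact: lt_le_trans t_le_s.
have m_gt0 : 0 < m by apply: lt_le_trans hm; rewrite !mulr_gt0 //; lra.
rewrite invf_div mulrA ltr_pdivrMr // [X in _ < X]mulrAC ltr_pdivlMr //.
(* d^2 t <= d^2 s < (d+1)^2 s <= (d+1) m / 2 *)
have dds : d * d * t <= d * d * s by rewrite ler_pM2l // mulr_gt0.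
have dds' : d * d * s < (d + 1) * (d + 1) * s by rewrite ltr_pM2r //; nra.
have dm : (d + 1) * (2 * (d + 1) * s) <= (d + 1) * m by rewrite ler_pM2l //; lra.
nra.
Qed.

Theorem lemma3p3 (R : rcfType) (n : nat) (e : rel 'I_n)
  (e_sym : symmetric e) (e_irr : irreflexive e)
  (e_conn : forall x y : 'I_n, connect e x y)
  (hm : 2 * n%:R * Num.sqrt (n%:R : R) <= (nedges e)%:R)
  (q : R) (hq : eigenvalue (signless_lap e R) q)
  (hqmax : forall a : R, eigenvalue (signless_lap e R) a -> a <= q) :
  q / randic e R < n%:R / Num.sqrt ((n - 1)%N)%:R.
Proof.
have n_gt0 := eigenvalue_dim_gt0 hq.
have m_gt0 : (0 < nedges e)%N.
  rewrite -(ltr0n R); apply: lt_le_trans hm.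
  by rewrite !mulr_gt0 ?sqrtr_gt0 ?ltr0n.
have [_ /edgesP[u [v [_ euv]]]] := card_gt0P m_gt0.
have n_gt1 := card_gt1_of_edge e_irr euv.
have d_ge1 : 1 <= (n.-1)%:R :> R by rewrite ler1n -ltnS prednK.
have n_eq : n%:R = (n.-1)%:R + 1 :> R by rewrite natr1 prednK // ltnW.
have m_div_gt0 : 0 < (nedges e)%:R / (n.-1)%:R :> R
  by rewrite divr_gt0 ?(lt_le_trans ltr01 d_ge1) ?ltr0n.
rewrite subn1 n_eq; rewrite n_eq in hm.
have randic_ge := nedges_div_le_randic R e_sym e_irr.
have randic_pos := lt_le_trans m_div_gt0 randic_ge.
apply: le_lt_trans (dense_ratio_lt d_ge1 hm).
apply: (@le_trans _ _ (2 * (n.-1)%:R / randic e R)).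
  by rewrite ler_pM2r ?invr_gt0 // (eigenvalue_signless_lap_le e_sym e_irr hq).
by rewrite ler_wpM2l ?mulr_ge0 // lef_pV2 ?posrE.
Qed.
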